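(* Let $\varepsilon>0$, $\Omega\subset\mathbb{R}^2$ bounded open, $u\in\mathcal{SF}_\varepsilon(\Omega)$ and $R\in\mathcal{R}_\varepsilon(u)$. Then the set $$\{u(i): i\in\mathcal{L}_\varepsilon,\ i\in\Gamma\text{ for some }\Gamma\in\mathcal{N}_\varepsilon(u)\text{ with }\Gamma\subset R\}$$ is either empty or consists of exactly two antipodal points of $\mathbb{S}^2$.
   Context: $\mathcal{L}=\{ae_1+b\hat e_2:a,b\in\mathbb{Z}\}$ with $e_1=(1,0)$, $\hat e_2=\frac12(1,\sqrt3)$, $\mathcal{L}_\varepsilon=\varepsilon\mathcal{L}$; $\mathcal{T}_\varepsilon$ is the set of closed triangles with vertices in $\mathcal{L}_\varepsilon$ pairwise at distance $\varepsilon$; $\mathcal{E}_\varepsilon$ the set of segments $[i,j]$, $i,j\in\mathcal{L}_\varepsilon$, $|i-j|=\varepsilon$. $n=(0,0,1)$; $\mathcal{SF}_\varepsilon(\Omega)$ is the set of $u:\mathcal{L}_\varepsilon\to\mathbb{S}^2$ with $u=n$ on $\mathcal{L}_\varepsilon\setminus\Omega$. $\mathcal{N}_\varepsilon(u)=\{[i,j]\in\mathcal{E}_\varepsilon:u(i)=-u(j)\}$. Two triangles of $\mathcal{T}_\varepsilon$ are neighbours if their intersection is an edge in $\mathcal{N}_\varepsilon(u)$, and connected if joined by a finite chain of consecutive neighbours. $\mathcal{R}_\varepsilon(u)$ is the set of admissible interpolation regions: unions of pairwise connected triangles of $\mathcal{T}_\varepsilon$ that are maximal with respect to inclusion. *)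

From Stdlib Require Import Reals Relations.
Open Scope R_scope.

Definition pt := (R * R)%type.
Definition vec3 := (R * R * R)%type.

Definition dist2 (p q : pt) : R :=
  sqrt ((fst p - fst q)^2 + (snd p - snd q)^2).

Definition norm3 (v : vec3) : R :=
  let '(a, b, c) := v in sqrt (a^2 + b^2 + c^2).
Definition on_sphere (v : vec3) : Prop := norm3 v = 1.
Definition npole : vec3 := (0, 0, 1).
Definition opp3 (v : vec3) : vec3 := let '(a, b, c) := v in (- a, - b, - c).

Definition open2 (O : pt -> Prop) : Prop :=
  forall x, O x -> exists r, 0 < r /\ forall y, dist2 x y < r -> O y.
Definition bounded2 (O : pt -> Prop) : Prop :=
  exists M, forall x, O x -> dist2 x (0, 0) <= M.

(* The lattice L_eps = eps * { a e1 + b e2hat : a b in Z },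
   e1 = (1,0), e2hat = (1/2, sqrt 3 / 2). *)
Definition lat_pt (eps : R) (a b : Z) : pt :=
  (eps * (IZR a + IZR b / 2), eps * (IZR b * sqrt 3 / 2)).
Definition in_lattice (eps : R) (p : pt) : Prop :=
  exists a b : Z, p = lat_pt eps a b.

Definition segment (p q : pt) (x : pt) : Prop :=
  exists t, 0 <= t <= 1 /\
    x = ((1 - t) * fst p + t * fst q, (1 - t) * snd p + t * snd q).
Definition triangle (p q r : pt) (x : pt) : Prop :=
  exists s t w, 0 <= s /\ 0 <= t /\ 0 <= w /\ s + t + w = 1 /\
    x = (s * fst p + t * fst q + w * fst r, s * snd p + t * snd q + w * snd r).

Definition is_tri (eps : R) (T : pt -> Prop) : Prop :=
  exists p q r, in_lattice eps p /\ in_lattice eps q /\ in_lattice eps r /\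
    dist2 p q = eps /\ dist2 q r = eps /\ dist2 p r = eps /\
    forall x, T x <-> triangle p q r x.

(* SF_eps(Omega): u : L_eps -> S^2 with u = n off Omega
   (u is given on all of R^2; only its values on L_eps matter). *)
Definition SF (eps : R) (Omega : pt -> Prop) (u : pt -> vec3) : Prop :=
  (forall i, in_lattice eps i -> on_sphere (u i)) /\
  (forall i, in_lattice eps i -> ~ Omega i -> u i = npole).

Definition in_N (eps : R) (u : pt -> vec3) (G : pt -> Prop) : Prop :=
  exists i j, in_lattice eps i /\ in_lattice eps j /\ dist2 i j = eps /\
    u i = opp3 (u j) /\ forall x, G x <-> segment i j x.

Definition tri_neighbours (eps : R) (u : pt -> vec3) (T1 T2 : pt -> Prop) : Prop :=
  is_tri eps T1 /\ is_tri eps T2 /\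
  exists G, in_N eps u G /\ forall x, (T1 x /\ T2 x) <-> G x.

Definition tri_connected (eps : R) (u : pt -> vec3) : relation (pt -> Prop) :=
  clos_refl_trans (pt -> Prop) (tri_neighbours eps u).

Definition conn_union (eps : R) (u : pt -> vec3) (S : pt -> Prop) : Prop :=
  exists F : (pt -> Prop) -> Prop,
    (forall T, F T -> is_tri eps T) /\
    (forall T1 T2, F T1 -> F T2 -> tri_connected eps u T1 T2) /\
    (forall x, S x <-> exists T, F T /\ T x).

Definition admissible_region (eps : R) (u : pt -> vec3) (Rg : pt -> Prop) : Prop :=
  conn_union eps u Rg /\
  forall S, conn_union eps u S -> (forall x, Rg x -> S x) -> forall x, S x -> Rg x.

From Pilot Require Import Defs.
From Stdlib Require Import Reals Lra Lia Psatz ZArith Classical.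
Open Scope R_scope.

(* A lattice edge [a, b] whose midpoint m lies in a closed lattice triangle pqr is an
   edge of that triangle.  Indeed 4|x - m|^2 / eps^2 is the hexagonal norm
   x1^2 + x1 x2 + x2^2 of the odd vector 2(x - a) + (a - b), so it equals 1 for x in
   {a, b} and is at least 3 for every other lattice point x; on the other hand the
   barycentric weights s, t, w of m satisfy
   s|p - m|^2 + t|q - m|^2 + w|r - m|^2 = eps^2 (st + tw + sw),
   which is too small if two vertices are far from m.  So the N-edges meeting one
   triangle join its vertices, any two of them share an endpoint, and their values
   agree up to sign.  Neighbouring triangles share an N-edge, so this sign class
   propagates along chains of neighbours through the whole region; finally a lattice
   point on an edge is one of its endpoints. *)

Definition sqdist (p q : pt) : R := (fst p - fst q)^2 + (snd p - snd q)^2.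
Definition midpoint (a b : pt) : pt := ((fst a + fst b) / 2, (snd a + snd b) / 2).

Lemma sqdist_of_dist2 p q e : dist2 p q = e -> sqdist p q = e^2.
Proof.
  intros <-; unfold dist2, sqdist.
  rewrite pow2_sqrt; [reflexivity|].
  apply Rplus_le_le_0_compat; apply pow2_ge_0.
Qed.

Lemma sqdist_sym p q : sqdist p q = sqdist q p.
Proof. unfold sqdist; ring. Qed.

Lemma midpoint_sym a b : midpoint a b = midpoint b a.
Proof. unfold midpoint; f_equal; field. Qed.

Lemma sqdist_midpoint_l a b : 4 * sqdist a (midpoint a b) = sqdist a b.
Proof. unfold sqdist, midpoint; simpl; field. Qed.

Lemma segment_l a b : segment a b a.
Proof. exists 0; split; [lra|]. destruct a; simpl; f_equal; ring. Qed.

Lemma segment_r a b : segment a b b.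
Proof. exists 1; split; [lra|]. destruct b; simpl; f_equal; ring. Qed.

Lemma segment_midpoint a b : segment a b (midpoint a b).
Proof. exists (1/2); split; [lra|]. unfold midpoint; f_equal; field. Qed.

Lemma sqdist_barycentre (p q r : pt) s t w : s + t + w = 1 ->
  let m := (s * fst p + t * fst q + w * fst r, s * snd p + t * snd q + w * snd r) in
  s * sqdist p m + t * sqdist q m + w * sqdist r m
  = s * t * sqdist p q + t * w * sqdist q r + s * w * sqdist p r.
Proof.
  intros Hsum m; subst m; unfold sqdist; simpl.
  replace w with (1 - s - t) by lra; ring.
Qed.

Definition hexform (x y : R) : R := x * x + x * y + y * y.
Definition hexformZ (x y : Z) : Z := x * x + x * y + y * y.
Definition hex_pt (e x y : R) : pt := (e * (x + y / 2), e * (y * sqrt 3 / 2)).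

Lemma sqdist_hex_pt e x1 y1 x2 y2 :
  sqdist (hex_pt e x1 y1) (hex_pt e x2 y2) = e^2 * hexform (x1 - x2) (y1 - y2).
Proof.
  assert (H3 : sqrt 3 * sqrt 3 = 3) by (apply sqrt_sqrt; lra).
  unfold sqdist, hex_pt, hexform; cbn [fst snd].
  replace ((e * (y1 * sqrt 3 / 2) - e * (y2 * sqrt 3 / 2)) ^ 2)
    with (e^2 * (y1 - y2)^2 / 4 * (sqrt 3 * sqrt 3)) by field.
  rewrite H3; field.
Qed.

Lemma midpoint_hex_pt e x1 y1 x2 y2 :
  midpoint (hex_pt e x1 y1) (hex_pt e x2 y2) = hex_pt e ((x1 + x2) / 2) ((y1 + y2) / 2).
Proof. unfold midpoint, hex_pt; simpl; f_equal; field. Qed.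

Lemma hexform_IZR x y : hexform (IZR x) (IZR y) = IZR (hexformZ x y).
Proof. unfold hexform, hexformZ; rewrite !plus_IZR, !mult_IZR; reflexivity. Qed.

Lemma hexformZ_completed_square x y :
  (4 * hexformZ x y = (2 * x + y) * (2 * x + y) + 3 * (y * y))%Z.
Proof. unfold hexformZ; ring. Qed.

Lemma hexformZ_sym x y : hexformZ x y = hexformZ y x.
Proof. unfold hexformZ; ring. Qed.

Lemma hexformZ_ge1 x y : (x, y) <> (0%Z, 0%Z) -> (1 <= hexformZ x y)%Z.
Proof.
  intros Hxy.
  pose proof (hexformZ_completed_square x y).
  pose proof (hexformZ_completed_square y x); rewrite hexformZ_sym in *.
  destruct (Z.eq_dec y 0) as [->|Hy]; [|nia].
  destruct (Z.eq_dec x 0) as [->|Hx]; [congruence|nia].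
Qed.

Lemma hexformZ_small_bound x y : (hexformZ x y <= 2)%Z -> (-1 <= x <= 1 /\ -1 <= y <= 1)%Z.
Proof.
  intros H.
  pose proof (hexformZ_completed_square x y).
  pose proof (hexformZ_completed_square y x); rewrite hexformZ_sym in *.
  split; nia.
Qed.

Lemma hexformZ_shift_unit y1 y2 d1 d2 : hexformZ d1 d2 = 1%Z ->
  (y1 = 0 /\ y2 = 0)%Z \/ (y1 = - d1 /\ y2 = - d2)%Z \/
  (3 <= hexformZ (2 * y1 + d1) (2 * y2 + d2))%Z.
Proof.
  intros Hd.
  destruct (Z_lt_le_dec (hexformZ (2 * y1 + d1) (2 * y2 + d2)) 3) as [Hlt|]; [|auto].
  destruct (hexformZ_small_bound d1 d2) as [Bd1 Bd2]; [lia|].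
  destruct (hexformZ_small_bound (2 * y1 + d1) (2 * y2 + d2)) as [By1 By2]; [lia|].
  unfold hexformZ in *.
  assert (Hy1 : (y1 = -1 \/ y1 = 0 \/ y1 = 1)%Z) by lia.
  assert (Hy2 : (y2 = -1 \/ y2 = 0 \/ y2 = 1)%Z) by lia.
  assert (Hd1 : (d1 = -1 \/ d1 = 0 \/ d1 = 1)%Z) by lia.
  assert (Hd2 : (d2 = -1 \/ d2 = 0 \/ d2 = 1)%Z) by lia.
  destruct Hy1 as [-> | [-> | ->]]; destruct Hy2 as [-> | [-> | ->]];
  destruct Hd1 as [-> | [-> | ->]]; destruct Hd2 as [-> | [-> | ->]]; simpl in *; lia.
Qed.

Lemma lat_pt_hex_pt e a b : lat_pt e a b = hex_pt e (IZR a) (IZR b).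
Proof. reflexivity. Qed.

Lemma sqdist_lat_pt e a1 a2 b1 b2 :
  sqdist (lat_pt e a1 a2) (lat_pt e b1 b2) = e^2 * IZR (hexformZ (a1 - b1) (a2 - b2)).
Proof. rewrite !lat_pt_hex_pt, sqdist_hex_pt, <- !minus_IZR, hexform_IZR; reflexivity. Qed.

Lemma sqdist_lat_pt_midpoint e x1 x2 a1 a2 b1 b2 :
  4 * sqdist (lat_pt e x1 x2) (midpoint (lat_pt e a1 a2) (lat_pt e b1 b2))
  = e^2 * IZR (hexformZ (2 * (x1 - a1) + (a1 - b1)) (2 * (x2 - a2) + (a2 - b2))).
Proof.
  rewrite !lat_pt_hex_pt, midpoint_hex_pt, sqdist_hex_pt, <- hexform_IZR.
  rewrite !plus_IZR, !mult_IZR, !minus_IZR; unfold hexform; field.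
Qed.

Lemma lattice_eq_or_sqdist_ge e x y : in_lattice e x -> in_lattice e y ->
  x = y \/ e^2 <= sqdist x y.
Proof.
  intros [x1 [x2 ->]] [y1 [y2 ->]].
  destruct (classic (x1 = y1 /\ x2 = y2)) as [[-> ->]|Hne]; [now left|right].
  assert (Hq : (1 <= hexformZ (x1 - y1) (x2 - y2))%Z)
    by (apply hexformZ_ge1; intros H; injection H; lia).
  apply IZR_le in Hq; pose proof (pow2_ge_0 e).
  rewrite sqdist_lat_pt; nra.
Qed.

Lemma lattice_unit_edge_midpoint_far e x a b :
  in_lattice e x -> in_lattice e a -> in_lattice e b -> sqdist a b = e^2 ->
  x = a \/ x = b \/ 3 * e^2 <= 4 * sqdist x (midpoint a b).
Proof.
  intros [x1 [x2 ->]] [a1 [a2 ->]] [b1 [b2 ->]] Hab.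
  destruct (Req_dec e 0) as [->|He].
  - left; unfold lat_pt; f_equal; ring.
  - assert (Hunit : hexformZ (a1 - b1) (a2 - b2) = 1%Z).
    { apply eq_IZR; rewrite sqdist_lat_pt in Hab.
      apply (Rmult_eq_reg_l (e^2)); [lra | apply pow_nonzero, He]. }
    rewrite sqdist_lat_pt_midpoint.
    destruct (hexformZ_shift_unit (x1 - a1) (x2 - a2) _ _ Hunit)
      as [[H1 H2] | [[H1 H2] | Hfar]].
    + left; f_equal; f_equal; lia.
    + right; left; f_equal; f_equal; lia.
    + right; right; apply IZR_le in Hfar; pose proof (pow2_ge_0 e); nra.
Qed.

Lemma lattice_on_unit_segment e i a b : 0 < e ->
  in_lattice e i -> in_lattice e a -> in_lattice e b -> sqdist a b = e^2 ->
  segment a b i -> i = a \/ i = b.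
Proof.
  intros He Li La Lb Hab [t [Ht Hi]].
  assert (Hia : sqdist i a = t^2 * e^2)
    by (rewrite <- Hab, Hi; unfold sqdist; cbn [fst snd]; ring).
  assert (Hib : sqdist i b = (1 - t)^2 * e^2)
    by (rewrite <- Hab, Hi; unfold sqdist; cbn [fst snd]; ring).
  destruct (lattice_eq_or_sqdist_ge e i a Li La) as [|Fa]; [now left|].
  destruct (lattice_eq_or_sqdist_ge e i b Li Lb) as [|Fb]; [now right|].
  exfalso; rewrite Hia in Fa; rewrite Hib in Fb.
  assert (1 <= t^2) by nra.
  assert (1 <= (1 - t)^2) by nra.
  nra.
Qed.

Lemma barycentric_two_far_absurd e2 s t w X Y Z :
  0 < e2 -> 0 <= s -> 0 <= t -> 0 <= w -> s + t + w = 1 ->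
  e2 <= X -> 3 * e2 <= Y -> 3 * e2 <= Z ->
  s * X + t * Y + w * Z <> 4 * e2 * (s * t + t * w + s * w).
Proof.
  intros He Hs Ht Hw Hsum HX HY HZ Heq.
  (* with w = 1 - s - t the gap is at least 2 - 4 s + 3 s^2 > 0 *)
  assert (Hgap : s + 3 * t + 3 * w - 4 * (s * t + t * w + s * w) > 0)
    by (replace w with (1 - s - t) in * by lra; nra).
  assert (s * X + t * Y + w * Z >= e2 * (s + 3 * t + 3 * w)) by nra.
  nra.
Qed.

Lemma sqdist_neq e x y : 0 < e -> sqdist x y = e^2 -> x <> y.
Proof. intros He Hxy ->; unfold sqdist in Hxy; rewrite !Rminus_diag in Hxy; nra. Qed.

Lemma lattice_unit_edge_midpoint_ge e x a b :
  in_lattice e x -> in_lattice e a -> in_lattice e b -> sqdist a b = e^2 ->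
  e^2 <= 4 * sqdist x (midpoint a b).
Proof.
  intros Lx La Lb Hab.
  pose proof (pow2_ge_0 e).
  destruct (lattice_unit_edge_midpoint_far e x a b Lx La Lb Hab) as [-> | [-> | Hfar]].
  - rewrite sqdist_midpoint_l; lra.
  - rewrite midpoint_sym, sqdist_midpoint_l, sqdist_sym; lra.
  - lra.
Qed.

Lemma unit_edge_endpoint_is_vertex e p q r a b : 0 < e ->
  in_lattice e p -> in_lattice e q -> in_lattice e r ->
  in_lattice e a -> in_lattice e b ->
  sqdist p q = e^2 -> sqdist q r = e^2 -> sqdist p r = e^2 -> sqdist a b = e^2 ->
  Defs.triangle p q r (midpoint a b) -> a = p \/ a = q \/ a = r.
Proof.
  intros He Lp Lq Lr La Lb Hpq Hqr Hpr Hab [s [t [w [Hs [Ht [Hw [Hsum Hm]]]]]]].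
  pose proof (sqdist_barycentre p q r s t w Hsum) as Hbar; cbv zeta in Hbar.
  rewrite <- Hm, Hpq, Hqr, Hpr in Hbar.
  set (X v := 4 * sqdist v (midpoint a b)).
  assert (Heq : s * X p + t * X q + w * X r = 4 * e^2 * (s * t + t * w + s * w))
    by (unfold X; lra).
  assert (Hnear : forall v, in_lattice e v -> e^2 <= X v)
    by (intros v Lv; apply lattice_unit_edge_midpoint_ge; assumption).
  assert (Hfar : forall v, in_lattice e v -> v <> a -> v = b \/ 3 * e^2 <= X v).
  { intros v Lv Hva.
    destruct (lattice_unit_edge_midpoint_far e v a b Lv La Lb Hab) as [|[|]];
      [contradiction | now left | now right]. }
  pose proof (sqdist_neq e p q He Hpq); pose proof (sqdist_neq e q r He Hqr);
  pose proof (sqdist_neq e p r He Hpr).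
  assert (He2 : 0 < e^2) by nra.
  pose proof (Hnear p Lp); pose proof (Hnear q Lq); pose proof (Hnear r Lr).
  apply NNPP; intros Hnot.
  assert (Hpa : p <> a) by (intros ->; tauto).
  assert (Hqa : q <> a) by (intros ->; tauto).
  assert (Hra : r <> a) by (intros ->; tauto).
  destruct (Hfar p Lp Hpa) as [Fp|Fp]; destruct (Hfar q Lq Hqa) as [Fq|Fq];
  destruct (Hfar r Lr Hra) as [Fr|Fr]; try congruence.
  - apply (barycentric_two_far_absurd (e^2) s t w (X p) (X q) (X r)); lra.
  - apply (barycentric_two_far_absurd (e^2) t s w (X q) (X p) (X r)); lra.
  - apply (barycentric_two_far_absurd (e^2) w s t (X r) (X p) (X q)); lra.
  - apply (barycentric_two_far_absurd (e^2) s t w (X p) (X q) (X r)); lra.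
Qed.

Lemma opp3K v : opp3 (opp3 v) = v.
Proof. destruct v as [[x y] z]; cbn; rewrite !Ropp_involutive; reflexivity. Qed.

Definition eq_up_to_sign (v w : vec3) : Prop := w = v \/ w = opp3 v.

Lemma eq_up_to_sign_refl v : eq_up_to_sign v v.
Proof. now left. Qed.

Lemma eq_up_to_sign_trans v w x :
  eq_up_to_sign v w -> eq_up_to_sign w x -> eq_up_to_sign v x.
Proof.
  intros [-> | ->] [-> | ->]; rewrite ?opp3K;
    [left | right | right | left]; reflexivity.
Qed.

Lemma three_point_pigeonhole {A : Type} (p q r a b c d : A) :
  (a = p \/ a = q \/ a = r) -> (b = p \/ b = q \/ b = r) ->
  (c = p \/ c = q \/ c = r) -> (d = p \/ d = q \/ d = r) ->
  a <> b -> c <> d -> c = a \/ c = b \/ d = a \/ d = b.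
Proof.
  intros [-> | [-> | ->]] [-> | [-> | ->]] [-> | [-> | ->]] [-> | [-> | ->]];
    intuition congruence.
Qed.

Definition jump_edge (e : R) (u : pt -> vec3) (a b : pt) : Prop :=
  in_lattice e a /\ in_lattice e b /\ sqdist a b = e^2 /\ u a = opp3 (u b).

Lemma jump_edge_sym e u a b : jump_edge e u a b -> jump_edge e u b a.
Proof.
  intros (La & Lb & Hab & Hu); refine (conj Lb (conj La (conj _ _))).
  - rewrite sqdist_sym; exact Hab.
  - rewrite Hu, opp3K; reflexivity.
Qed.

Lemma jump_edge_eq_up_to_sign e u a b : jump_edge e u a b -> eq_up_to_sign (u a) (u b).
Proof. intros (_ & _ & _ & Hu); right; rewrite Hu, opp3K; reflexivity. Qed.

Lemma in_N_jump_edge e u G : in_N e u G ->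
  exists a b, jump_edge e u a b /\ forall x, G x <-> segment a b x.
Proof.
  intros (a & b & La & Lb & Hab & Hu & HG).
  exists a, b; split; [|exact HG].
  exact (conj La (conj Lb (conj (sqdist_of_dist2 _ _ _ Hab) Hu))).
Qed.

Lemma jump_edges_in_triangle e u T a b c d : 0 < e -> is_tri e T ->
  jump_edge e u a b -> jump_edge e u c d -> T (midpoint a b) -> T (midpoint c d) ->
  eq_up_to_sign (u a) (u c).
Proof.
  intros He (p & q & r & Lp & Lq & Lr & Dpq & Dqr & Dpr & HT) Jab Jcd Tab Tcd.
  apply sqdist_of_dist2 in Dpq, Dqr, Dpr.
  assert (Hvertices : forall x y, jump_edge e u x y -> T (midpoint x y) ->
            (x = p \/ x = q \/ x = r) /\ (y = p \/ y = q \/ y = r)).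
  { intros x y (Lx & Ly & Hxy & _) Txy; apply HT in Txy; split.
    - apply (unit_edge_endpoint_is_vertex e p q r x y); assumption.
    - rewrite sqdist_sym in Hxy; rewrite midpoint_sym in Txy.
      apply (unit_edge_endpoint_is_vertex e p q r y x); assumption. }
  assert (Hneq : forall x y, jump_edge e u x y -> x <> y)
    by (intros x y (_ & _ & Hxy & _); exact (sqdist_neq e x y He Hxy)).
  destruct (Hvertices a b Jab Tab) as [Va Vb], (Hvertices c d Jcd Tcd) as [Vc Vd].
  pose proof (jump_edge_eq_up_to_sign _ _ _ _ Jab) as Sab.
  pose proof (jump_edge_eq_up_to_sign _ _ _ _ (jump_edge_sym _ _ _ _ Jcd)) as Sdc.
  destruct (three_point_pigeonhole p q r a b c d Va Vb Vc Vd (Hneq a b Jab) (Hneq c d Jcd))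
    as [-> | [-> | [-> | ->]]].
  - apply eq_up_to_sign_refl.
  - exact Sab.
  - exact Sdc.
  - exact (eq_up_to_sign_trans _ _ _ Sab Sdc).
Qed.

Definition values_up_to_sign (e : R) (u : pt -> vec3) (v : vec3) (T : pt -> Prop) : Prop :=
  forall a b, jump_edge e u a b -> T (midpoint a b) -> eq_up_to_sign v (u a).

Lemma values_up_to_sign_neighbours e u v T1 T2 : 0 < e ->
  tri_neighbours e u T1 T2 -> values_up_to_sign e u v T1 -> values_up_to_sign e u v T2.
Proof.
  intros He (_ & HT2 & G & HN & HG) H1 c d Jcd Tcd.
  destruct (in_N_jump_edge _ _ _ HN) as (a & b & Jab & Hseg).
  assert (Hm : T1 (midpoint a b) /\ T2 (midpoint a b))
    by (apply HG, Hseg, segment_midpoint).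
  apply (eq_up_to_sign_trans _ (u a)).
  - exact (H1 a b Jab (proj1 Hm)).
  - exact (jump_edges_in_triangle e u T2 a b c d He HT2 Jab Jcd (proj2 Hm) Tcd).
Qed.

Lemma values_up_to_sign_connected e u v T1 T2 : 0 < e ->
  tri_connected e u T1 T2 -> values_up_to_sign e u v T1 -> values_up_to_sign e u v T2.
Proof. intros He H; induction H; eauto using values_up_to_sign_neighbours. Qed.

Lemma conn_union_jump_edges e u S a0 b0 a b : 0 < e -> conn_union e u S ->
  jump_edge e u a0 b0 -> S (midpoint a0 b0) ->
  jump_edge e u a b -> S (midpoint a b) -> eq_up_to_sign (u a0) (u a).
Proof.
  intros He (F & Htri & Hconn & HS) J0 M0 J M.
  apply HS in M0 as (T0 & FT0 & T0m); apply HS in M as (T & FT & Tm).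
  refine (values_up_to_sign_connected e u (u a0) T0 T He (Hconn T0 T FT0 FT) _ a b J Tm).
  intros c d Jcd Tcd.
  exact (jump_edges_in_triangle e u T0 a0 b0 c d He (Htri T0 FT0) J0 Jcd T0m Tcd).
Qed.

Lemma conn_union_jump_segment_values e u S a0 b0 G i : 0 < e -> conn_union e u S ->
  jump_edge e u a0 b0 -> S (midpoint a0 b0) ->
  in_N e u G -> (forall x, G x -> S x) -> G i -> in_lattice e i ->
  eq_up_to_sign (u a0) (u i).
Proof.
  intros He HS J0 M0 HN HGS Gi Li.
  destruct (in_N_jump_edge _ _ _ HN) as (a & b & J & Hseg).
  assert (M : S (midpoint a b)) by (apply HGS, Hseg, segment_midpoint).
  pose proof J as (La & Lb & Hab & _).
  destruct (lattice_on_unit_segment e i a b He Li La Lb Hab (proj1 (Hseg i) Gi)) as [-> | ->].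
  - exact (conn_union_jump_edges e u S a0 b0 a b He HS J0 M0 J M).
  - rewrite midpoint_sym in M.
    exact (conn_union_jump_edges e u S a0 b0 b a He HS J0 M0 (jump_edge_sym _ _ _ _ J) M).
Qed.

Theorem lemma5p2 (eps : R) (Omega : pt -> Prop) (u : pt -> vec3) (Rg : pt -> Prop) :
  0 < eps -> open2 Omega -> bounded2 Omega ->
  SF eps Omega u -> admissible_region eps u Rg ->
  let Vals := fun v : vec3 =>
    exists i, in_lattice eps i /\ v = u i /\
      exists G, in_N eps u G /\ G i /\ (forall x, G x -> Rg x) in
  (forall v, ~ Vals v) \/
  (exists v, on_sphere v /\ forall w, Vals w <-> (w = v \/ w = opp3 v)).
Proof.
  intros He _ _ [Hsphere _] [Hconn _] Vals.
  destruct (classic (exists w, Vals w)) as [[w0 Hw0]|Hnone];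
    [right | left; intros v Hv; exact (Hnone (ex_intro _ v Hv))].
  destruct Hw0 as (_ & _ & _ & G0 & HN0 & _ & HG0).
  destruct (in_N_jump_edge _ _ _ HN0) as (a0 & b0 & J0 & Hseg0).
  assert (M0 : Rg (midpoint a0 b0)) by (apply HG0, Hseg0, segment_midpoint).
  exists (u a0); split; [apply Hsphere, J0|].
  intros w; split.
  - intros (i & Li & -> & G & HN & Gi & HG).
    exact (conn_union_jump_segment_values eps u Rg a0 b0 G i He Hconn J0 M0 HN HG Gi Li).
  - intros [-> | ->].
    + exists a0; refine (conj (proj1 J0) (conj eq_refl _)).
      exists G0; refine (conj HN0 (conj _ HG0)); apply Hseg0, segment_l.
    + exists b0; refine (conj (proj1 (proj2 J0)) (conj _ _)).
      * destruct J0 as (_ & _ & _ & ->); apply opp3K.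
      * exists G0; refine (conj HN0 (conj _ HG0)); apply Hseg0, segment_r.
Qed.
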